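(* Let $(X,\tau_\delta)_{\delta>0}$ be a Hilbert dilation system, $\mathcal E\subseteq X$ an ellipsoid, $\epsilon\in(0,1/2)$, $I\subseteq(0,\infty)$ a compact interval, and suppose $\tau_\delta\mathcal E$ is $\epsilon$-degenerate for every $\delta\in I$. Then there is a subspace $H\subseteq X$ such that for all $\delta\in I$: (a) $\tau_\delta\mathcal E\subseteq\tau_\delta H+\epsilon\mathcal B$, and (b) $\tau_\delta H\cap\frac{1}{2\epsilon}\mathcal B\subseteq\tau_\delta\mathcal E$.
   Context: Hilbert dilation system: $X$ a real Hilbert space of finite dimension $d$, $X=\bigoplus_{\nu=1}^mX_\nu$ orthogonal, $\tau_\delta|_{X_\nu}=\delta^{-\nu}\mathrm{id}$. $\mathcal B$ is the closed unit ball of $X$. A (centered) ellipsoid is a set $\{\sum_{i=1}^dc_i\sigma_iv_i:\sum c_i^2\le1\}$ with $\sigma_1\ge\dots\ge\sigma_d\ge0$ (principal axis lengths) and $\{v_i\}$ an orthonormal basis. An ellipsoid is $\epsilon$-degenerate if none of its principal axis lengths lies in $[\epsilon,\epsilon^{-1}]$. *)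

From HB Require Import structures.
From mathcomp Require Import all_boot all_order all_algebra.
From mathcomp Require Import classical_sets reals.
Set Implicit Arguments. Unset Strict Implicit. Unset Printing Implicit Defensive.
Import Order.TTheory GRing.Theory Num.Theory.
Local Open Scope ring_scope.
Local Open Scope classical_set_scope.

(* The Hilbert space X of dimension d is modelled as 'rV[R]_d with the
   standard inner product. *)
Definition dotp (R : realType) (d : nat) (x y : 'rV[R]_d) : R := (x *m y^T) 0 0.
Definition vnorm (R : realType) (d : nat) (x : 'rV[R]_d) : R := Num.sqrt (dotp x x).

Definition ballr (R : realType) (d : nat) (r : R) : set 'rV[R]_d :=
  [set x | vnorm x <= r].

Definition msum (R : realType) (d : nat) (A B : set 'rV[R]_d) : set 'rV[R]_d :=
  [set z | exists x y, A x /\ B y /\ z = x + y].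

Definition orthonormal_rows (R : realType) (d : nat) (V : 'M[R]_d) : Prop :=
  V *m V^T = 1%:M.

(* The dilations: an orthonormal basis (rows of U) adapted to the orthogonal
   decomposition X = X_1 (+) ... (+) X_m, the basis vector row i U lying in
   X_(w i), with 1 <= w i <= m.  tau_delta acts by delta^(-nu) on X_nu. *)
Definition dil (R : realType) (d : nat) (U : 'M[R]_d) (w : 'I_d -> nat)
  (delta : R) (x : 'rV[R]_d) : 'rV[R]_d :=
  x *m (U^T *m diag_mx (\row_i (delta ^- (w i))) *m U).

Definition ellipsoid_of (R : realType) (d : nat) (sigma : 'I_d -> R) (V : 'M[R]_d)
  : set 'rV[R]_d :=
  [set x | exists c : 'rV[R]_d, dotp c c <= 1 /\
           x = \sum_(i < d) (c 0 i * sigma i) *: row i V].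

Definition axes_ok (R : realType) (d : nat) (sigma : 'I_d -> R) : Prop :=
  (forall i : 'I_d, 0 <= sigma i) /\
  (forall i j : 'I_d, (i <= j)%N -> sigma j <= sigma i).

Definition is_ellipsoid (R : realType) (d : nat) (E : set 'rV[R]_d) : Prop :=
  exists sigma V, axes_ok sigma /\ orthonormal_rows V /\ E = ellipsoid_of sigma V.

Definition eps_degenerate (R : realType) (d : nat) (eps : R) (E : set 'rV[R]_d)
  : Prop :=
  exists sigma V, axes_ok sigma /\ orthonormal_rows V /\ E = ellipsoid_of sigma V /\
    forall i : 'I_d, ~ (eps <= sigma i /\ sigma i <= eps^-1).

From HB Require Import structures.
From mathcomp Require Import all_boot all_order all_algebra.
From mathcomp Require Import classical_sets reals.
From mathcomp Require Import ring lra zify.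
Import Order.TTheory GRing.Theory Num.Theory.
Local Open Scope ring_scope.
Local Open Scope classical_set_scope.
Set Implicit Arguments. Unset Strict Implicit.

(* For each delta in [a, b] fix principal axes (sigma, V) of tau_delta E,
   tau_delta being x |-> x *m Dm delta.  Axes longer than 1/eps are "long";
   the others are shorter than eps.  The long (short) space at delta is the
   pull-back by tau_delta of the span of the long (short) axes.  We take H
   to be the long space at a.
   (a) tau_a x splits into a long part and a short part of norm <= eps, and
       tau_(delta/a) is a contraction for delta >= a.
   (b) Transversality: if tau_delta' shrinks no vector by more than a factor
       kappa > eps^4 relative to tau_delta, the long space at delta meets
       the short space at delta' only in 0.  Hence the rank of the long
       space never decreases along short steps, so not from a to b, and the
       long space at b plus the short space at a is everything.  Writing y
       in H accordingly and rescaling its first component into E, the axes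
       at a show that y is in E once |tau_delta y| <= 1/(2 eps). *)

Section SquaredNorm.
Variables (R : realType) (d : nat).
Implicit Types (x y : 'rV[R]_d) (V : 'M[R]_d).

Definition sqn x : R := \sum_i x 0 i ^+ 2.

Lemma dotp_sqn x : dotp x x = sqn x.
Proof. by rewrite /dotp !mxE; apply: eq_bigr => i _; rewrite mxE expr2. Qed.

Lemma sqn_ge0 x : 0 <= sqn x.
Proof. by apply: sumr_ge0 => i _; rewrite sqr_ge0. Qed.

Lemma sqn_gt0 x : (0 < sqn x) = (sqn x != 0).
Proof. by rewrite lt0r sqn_ge0 andbT. Qed.

Lemma sqn_eq0 x : sqn x = 0 -> x = 0.
Proof.
move=> /eqP; rewrite psumr_eq0 => [/allP x0|i _]; last exact: sqr_ge0.
apply/rowP => i; rewrite mxE; apply/eqP.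
by rewrite -sqrf_eq0; apply: x0; rewrite mem_index_enum.
Qed.

Lemma vnorm_leE x r : 0 <= r -> (vnorm x <= r) = (sqn x <= r ^+ 2).
Proof.
move=> r0; rewrite /vnorm dotp_sqn -[r in LHS]ger0_norm // -sqrtr_sqr.
by rewrite ler_sqrt // sqr_ge0.
Qed.

Lemma sqn_scale c x : sqn (c *: x) = c ^+ 2 * sqn x.
Proof. by rewrite /sqn mulr_sumr; apply: eq_bigr => i _; rewrite mxE exprMn. Qed.

Lemma sqn0 : sqn 0 = 0.
Proof. by rewrite /sqn big1 // => i _; rewrite mxE expr0n. Qed.

Lemma sqnN x : sqn (- x) = sqn x.
Proof. by rewrite -scaleN1r sqn_scale sqrrN expr1n mul1r. Qed.

Lemma sqn_rescale x e : sqn x != 0 -> 0 < e ->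
  exists2 l : R, 0 < l & sqn (l *: x) = e ^- 2.
Proof.
rewrite -sqn_gt0 => x0 e0; exists (e * Num.sqrt (sqn x))^-1.
  by rewrite invr_gt0 mulr_gt0 ?sqrtr_gt0.
by rewrite sqn_scale exprVn exprMn sqr_sqrtr ?ltW // invfM divfK // gt_eqF.
Qed.

Lemma sqn_sub_le x y : sqn (x - y) <= 2 * sqn x + 2 * sqn y.
Proof.
rewrite /sqn !mulr_sumr -big_split /=; apply: ler_sum => i _; rewrite !mxE.
have := sqr_ge0 (x 0 i + y 0 i); nra.
Qed.

Lemma sqn_orth V x : orthonormal_rows V -> sqn (x *m V) = sqn x.
Proof.
by move=> hV; rewrite -!dotp_sqn /dotp trmx_mul mulmxA -(mulmxA x) hV mulmx1.
Qed.

Lemma orth_cancel V x y : orthonormal_rows V -> x *m V = y *m V -> x = y.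
Proof.
by move=> hV /(congr1 (mulmx^~ V^T)); rewrite -!mulmxA hV !mulmx1.
Qed.

End SquaredNorm.

Section LinearAlgebra.
Variables (F : fieldType) (d : nat).
Implicit Types (A B : 'M[F]_d).

Lemma disjoint_rank A B :
  (forall z : 'rV_d, (z <= A)%MS -> (z <= B)%MS -> z = 0) ->
  \rank (A + B)%MS = (\rank A + \rank B)%N.
Proof.
move=> hAB; apply: mxrank_disjoint_sum; apply/eqP; rewrite -submx0.
apply/rV_subP => z; rewrite sub_capmx => /andP[zA zB].
by rewrite (hAB z zA zB) sub0mx.
Qed.

Lemma disjoint_decompose A B (y : 'rV_d) :
  (forall z : 'rV_d, (z <= A)%MS -> (z <= B)%MS -> z = 0) ->
  (d <= \rank A + \rank B)%N -> exists p q, y = p *m A + q *m B.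
Proof.
move=> hAB hr; have : (y <= A + B)%MS.
  by apply: submx_full; rewrite /row_full eqn_leq rank_leq_col disjoint_rank.
by case/sub_addsmxP => -[p q] /= ->; exists p, q.
Qed.

Lemma sub_idem_range (P M : 'M[F]_d) (z : 'rV_d) : P *m P = P ->
  (z <= P *m M)%MS -> exists2 t : 'rV_d, t *m P = t & z = t *m M.
Proof.
move=> hP /submxP[p ->]; exists (p *m P); first by rewrite -mulmxA hP.
by rewrite mulmxA.
Qed.

End LinearAlgebra.

Section Axes.
Variables (R : realType) (d : nat) (eps : R) (sigma : 'I_d -> R).
Implicit Types (p c xi : 'rV[R]_d).

(* An axis is long when its length exceeds 1/eps; Plong projects coordinates
   (relative to the axes) onto the long axes. *)
Definition long_axis i : bool := eps^-1 < sigma i.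
Definition Plong : 'M[R]_d := diag_mx (\row_i (long_axis i)%:R).

Lemma Plong_coord p i : (p *m Plong) 0 i = if long_axis i then p 0 i else 0.
Proof. by rewrite mul_mx_diag !mxE; case: long_axis; rewrite ?mulr1 ?mulr0. Qed.

Lemma Pshort_coord p i :
  (p *m (1%:M - Plong)) 0 i = if long_axis i then 0 else p 0 i.
Proof.
rewrite mulmxBr mulmx1; move: (p *m Plong) (Plong_coord p i) => q hq.
by rewrite !mxE hq; case: long_axis; rewrite ?subrr ?subr0.
Qed.

Lemma Plong_idem : Plong *m Plong = Plong.
Proof.
rewrite /Plong mulmx_diag; congr diag_mx; apply/rowP => i.
by rewrite !mxE; case: long_axis; rewrite ?mulr1 ?mulr0.
Qed.

Lemma sqn_Plong p : sqn (p *m Plong) <= sqn p.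
Proof.
rewrite /sqn; apply: ler_sum => i _; rewrite Plong_coord.
by case: long_axis; rewrite ?expr0n ?sqr_ge0.
Qed.

Lemma Pshort_idem : (1%:M - Plong) *m (1%:M - Plong) = 1%:M - Plong.
Proof. by rewrite mulmxBl mul1mx mulmxBr mulmx1 Plong_idem subrr subr0. Qed.

Lemma short_supported p : p *m (1%:M - Plong) = p -> p *m Plong = 0.
Proof.
by move=> <-; rewrite -mulmxA mulmxBl mul1mx Plong_idem subrr mulmx0.
Qed.

Lemma short_part_id p : p *m Plong = 0 -> p *m (1%:M - Plong) = p.
Proof. by move=> hp; rewrite mulmxBr mulmx1 hp subr0. Qed.

Definition scaled c : 'rV[R]_d := \row_i (c 0 i * sigma i).

Lemma ellipsoidP (V : 'M[R]_d) x :
  ellipsoid_of sigma V x <-> exists2 c, sqn c <= 1 & x = scaled c *m V.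
Proof.
have sumE c : \sum_(i < d) (c 0 i * sigma i) *: row i V = scaled c *m V.
  by rewrite mulmx_sum_row; apply: eq_bigr => i _; rewrite mxE.
rewrite /ellipsoid_of /=; split=> [[c [hc ->]] | [c hc ->]].
  by exists c; rewrite -?dotp_sqn ?sumE.
by exists c; rewrite dotp_sqn sumE.
Qed.

Lemma ellipsoid_shrink (V : 'M[R]_d) c k : sqn c <= 1 -> 0 <= k <= 1 ->
  ellipsoid_of sigma V ((k *: (scaled c *m Plong)) *m V).
Proof.
move=> hc /andP[k0 k1]; apply/ellipsoidP; exists (k *: (c *m Plong)).
  rewrite sqn_scale; apply: le_trans (_ : 1 * sqn c <= _); last by rewrite mul1r.
  by rewrite ler_pM ?sqr_ge0 ?sqn_ge0 ?expr_le1 ?sqn_Plong.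
congr (_ *m _); apply/rowP => i.
move: (Plong_coord (scaled c) i) (Plong_coord c i).
move: (scaled c *m Plong) (c *m Plong) => P Q hP hQ; rewrite !mxE hP hQ mxE.
by case: long_axis; rewrite ?mulr0 ?mul0r // mulrA.
Qed.

Hypotheses (heps : 0 < eps) (hsigma : forall i, 0 <= sigma i)
  (hgap : forall i, ~ (eps <= sigma i /\ sigma i <= eps^-1)).

(* Short axes have length < eps, so the short part of a point of the
   ellipsoid has norm at most eps. *)
Lemma short_part_le c : sqn c <= 1 -> sqn (scaled c *m (1%:M - Plong)) <= eps ^+ 2.
Proof.
move=> hc; apply: le_trans (_ : \sum_i c 0 i ^+ 2 * eps ^+ 2 <= _); last first.
  by rewrite -mulr_suml ler_piMl // sqr_ge0.
apply: ler_sum => i _; rewrite Pshort_coord mxE.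
case: (boolP (long_axis i)) => hl; first by rewrite expr0n mulr_ge0 ?sqr_ge0.
have lt_eps : sigma i < eps.
  rewrite ltNge; apply/negP => he; have hs : sigma i <= eps^-1 by rewrite leNgt.
  exact: hgap i (conj he hs).
by rewrite exprMn ler_wpM2l ?sqr_ge0 // ler_sqr ?nnegrE ?hsigma // ltW.
Qed.

Lemma long_ball_sub (V : 'M[R]_d) xi : xi *m Plong = xi -> sqn xi <= eps ^- 2 ->
  ellipsoid_of sigma V (xi *m V).
Proof.
move=> hxi hn; apply/ellipsoidP; exists (\row_i (xi 0 i / sigma i)); last first.
  congr (_ *m _); apply/rowP => i; rewrite !mxE -hxi Plong_coord.
  case: (boolP (long_axis i)) => hl; last by rewrite !mul0r.
  by rewrite divfK // gt_eqF // (lt_trans _ hl) // invr_gt0.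
apply: le_trans (_ : eps ^+ 2 * sqn xi <= _); last first.
  by rewrite -(mulfV (expf_neq0 2 (lt0r_neq0 heps))) ler_wpM2l ?sqr_ge0.
rewrite /sqn mulr_sumr; apply: ler_sum => i _; rewrite mxE -hxi Plong_coord.
case: (boolP (long_axis i)) => hl; last by rewrite mul0r expr0n mulr_ge0 ?sqr_ge0.
have s0 : 0 < sigma i by apply: lt_trans hl; rewrite invr_gt0.
rewrite exprMn mulrC ler_wpM2r ?sqr_ge0 //.
rewrite ler_sqr ?nnegrE ?invr_ge0 ?(ltW s0) ?(ltW heps) //.
by rewrite -[eps]invrK lef_pV2 ?posrE ?invr_gt0 // ltW.
Qed.

End Axes.

Section Dilations.
Variables (R : realType) (d m : nat) (U : 'M[R]_d) (w : 'I_d -> nat).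
Hypothesis hU : orthonormal_rows U.
Implicit Types (x : 'rV[R]_d) (a b s : R).

(* The matrix of tau_delta, acting on row vectors from the right; it is
   locked so that rewriting with associativity never looks inside it. *)
Fact Dm_key : unit. Proof. exact: tt. Qed.
Definition Dm delta : 'M[R]_d :=
  locked_with Dm_key (U^T *m diag_mx (\row_i (delta ^- w i)) *m U).

Lemma DmE delta : Dm delta = U^T *m diag_mx (\row_i (delta ^- w i)) *m U.
Proof. exact: locked_withE. Qed.

Lemma dilE delta x : dil U w delta x = x *m Dm delta.
Proof. by rewrite DmE. Qed.

Lemma DmM a b : Dm a *m Dm b = Dm (a * b).
Proof.
rewrite !DmE !mulmxA -(mulmxA _ U U^T) hU mulmx1 -(mulmxA U^T) mulmx_diag.
congr (_ *m diag_mx _ *m _); apply/rowP => i.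
by rewrite !mxE exprMn invfM.
Qed.

Lemma Dm1 : Dm 1 = 1%:M.
Proof.
rewrite DmE; have -> : diag_mx (\row_i (1 ^- w i)) = 1%:M :> 'M[R]_d.
  by apply/matrixP => i j; rewrite !mxE expr1n invr1.
by rewrite mulmx1 (mulmx1C hU).
Qed.

Lemma DmVK delta : delta != 0 -> Dm delta^-1 *m Dm delta = 1%:M.
Proof. by move=> d0; rewrite DmM mulVf // Dm1. Qed.

Lemma DmK delta x : delta != 0 -> x *m Dm delta^-1 *m Dm delta = x.
Proof. by move=> d0; rewrite -mulmxA DmVK // mulmx1. Qed.

Lemma Dm_unit delta : delta != 0 -> Dm delta \in unitmx.
Proof. by move=> d0; case: (mulmx1_unit (DmVK d0)). Qed.

Lemma Dm_inj delta :
  delta != 0 -> injective (mulmx^~ (Dm delta) : 'rV_d -> 'rV_d).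
Proof. by move=> d0; apply: row_free_inj; rewrite row_free_unit Dm_unit. Qed.

Hypothesis hw : forall i, (0 < w i <= m)%N.

Lemma sqn_Dm_bounds s x : 1 <= s ->
  (s ^+ m) ^- 2 * sqn x <= sqn (x *m Dm s) <= sqn x.
Proof.
have hUT : orthonormal_rows U^T by rewrite /orthonormal_rows trmxK (mulmx1C hU).
move=> s1; rewrite DmE !mulmxA sqn_orth // -[sqn x](sqn_orth x hUT).
move: (x *m U^T) => y; rewrite mul_mx_diag.
have s0 : 0 < s by apply: lt_le_trans s1.
apply/andP; split; rewrite /sqn ?mulr_sumr; apply: ler_sum => i _;
  rewrite !mxE exprMn; have /andP[_ wm] := hw i; set P := s ^+ w i.
- have P1 : 1 <= P by rewrite exprn_ege1.
  have Pm : P <= s ^+ m by rewrite ler_weXn2l.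
  have hPm : (s ^+ m)^-1 <= P^-1.
    by rewrite lef_pV2 ?posrE ?exprn_gt0 ?(lt_le_trans ltr01 P1).
  rewrite mulrC ler_wpM2l ?sqr_ge0 // -exprVn.
  by rewrite ler_sqr ?nnegrE ?invr_ge0 ?exprn_ge0 ?(ltW s0).
- apply: ler_piMr; first exact: sqr_ge0.
  rewrite expr_le1 ?invr_ge0 ?exprn_ge0 ?(ltW s0) // invf_le1 ?exprn_gt0 //.
  exact: exprn_ege1.
Qed.

Lemma sqn_Dm_mono a b x : 0 < a -> a <= b ->
  ((b / a) ^+ m) ^- 2 * sqn (x *m Dm a) <= sqn (x *m Dm b) <= sqn (x *m Dm a).
Proof.
move=> a0 ab; have s1 : 1 <= b / a by rewrite ler_pdivlMr // mul1r.
have -> : x *m Dm b = x *m Dm a *m Dm (b / a).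
  by rewrite -mulmxA DmM mulrC divfK // lt0r_neq0.
exact: sqn_Dm_bounds.
Qed.

End Dilations.

Section DegenerateDilates.
Variables (R : realType) (d : nat) (U : 'M[R]_d) (w : 'I_d -> nat)
  (E : set 'rV[R]_d) (eps : R).
Hypotheses (hU : orthonormal_rows U) (heps : 0 < eps).
Implicit Types (delta kappa : R) (sigma : 'I_d -> R) (V : 'M[R]_d).
Implicit Types (x z : 'rV[R]_d).

Definition degenerate_axes delta sigma V : Prop :=
  axes_ok sigma /\ orthonormal_rows V /\ dil U w delta @` E = ellipsoid_of sigma V /\
  forall i, ~ (eps <= sigma i /\ sigma i <= eps^-1).

Definition long_space delta sigma V := Plong eps sigma *m V *m Dm U w delta^-1.
Definition short_space delta sigma V :=
  (1%:M - Plong eps sigma) *m V *m Dm U w delta^-1.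

Lemma mem_E delta sigma V x : 0 < delta -> degenerate_axes delta sigma V ->
  E x <-> ellipsoid_of sigma V (x *m Dm U w delta).
Proof.
move=> d0 [_ [_ [hE _]]]; rewrite -hE; split=> [Ex | [e Ee]].
  by exists x; rewrite // dilE.
by rewrite dilE => /(Dm_inj hU (lt0r_neq0 d0)) <-.
Qed.

Lemma long_spaceP delta sigma V z : 0 < delta ->
  (z <= long_space delta sigma V)%MS ->
  exists2 xi, xi *m Plong eps sigma = xi & z *m Dm U w delta = xi *m V.
Proof.
rewrite /long_space -mulmxA => d0.
move=> /(sub_idem_range (Plong_idem _ _))[xi hxi ->].
by exists xi => //; rewrite mulmxA DmK // lt0r_neq0.
Qed.

Lemma short_spaceP delta sigma V z : 0 < delta ->
  (z <= short_space delta sigma V)%MS ->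
  exists2 t, t *m Plong eps sigma = 0 & z *m Dm U w delta = t *m V.
Proof.
rewrite /short_space -mulmxA => d0.
move=> /(sub_idem_range (Pshort_idem _ _))[t ht ->].
by exists t; rewrite ?short_supported // mulmxA DmK // lt0r_neq0.
Qed.

Section OneDilate.
Variables (delta : R) (sigma : 'I_d -> R) (V : 'M[R]_d).
Hypotheses (hdelta : 0 < delta) (hax : degenerate_axes delta sigma V).

Lemma long_space_E z : (z <= long_space delta sigma V)%MS ->
  sqn (z *m Dm U w delta) <= eps ^- 2 -> E z.
Proof.
case: (hax) => _ [hV _] /(long_spaceP hdelta)[xi hxi hz].
rewrite hz sqn_orth // => hn; apply: (proj2 (mem_E _ hdelta hax)); rewrite hz.
exact: (long_ball_sub heps V hxi hn).
Qed.

Lemma short_space_E z : (z <= short_space delta sigma V)%MS -> E z ->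
  sqn (z *m Dm U w delta) <= eps ^+ 2.
Proof.
case: (hax) => -[hs _] [hV [_ hgap]] /(short_spaceP hdelta)[t ht hz].
move/(mem_E _ hdelta hax)/ellipsoidP => -[c hc].
rewrite hz => /(orth_cancel hV) tc.
rewrite sqn_orth // -(short_part_id ht) tc.
exact: (short_part_le heps hs hgap hc).
Qed.

Lemma long_short_rank :
  (d <= \rank (long_space delta sigma V) + \rank (short_space delta sigma V))%N.
Proof.
case: hax => _ [hV _]; apply: leq_trans (mxrank_add _ _).
rewrite /long_space /short_space -!mulmxDl addrC subrK mul1mx mxrank_unit //.
by rewrite unitmx_mul Dm_unit ?invr_neq0 ?gt_eqF // andbT; case: (mulmx1_unit hV).
Qed.

End OneDilate.

Lemma long_short_disjoint delta delta' sigma V sigma' V' kappa :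
  0 < delta -> 0 < delta' ->
  degenerate_axes delta sigma V -> degenerate_axes delta' sigma' V' ->
  (forall x, kappa * sqn (x *m Dm U w delta) <= sqn (x *m Dm U w delta')) ->
  eps ^+ 4 < kappa ->
  forall z, (z <= long_space delta sigma V)%MS ->
    (z <= short_space delta' sigma' V')%MS -> z = 0.
Proof.
move=> d0 d0' hax hax' hk hek z zl zs.
have [/sqn_eq0 z0|nz] := eqVneq (sqn (z *m Dm U w delta)) 0.
  by apply: (Dm_inj (w := w) hU (lt0r_neq0 d0)); rewrite /= z0 mul0mx.
have [l l0 hl] := sqn_rescale nz heps.
have lzl : (l *: z <= long_space delta sigma V)%MS by exact: scalemx_sub.
have lzs : (l *: z <= short_space delta' sigma' V')%MS by exact: scalemx_sub.
have hlz : sqn (l *: z *m Dm U w delta) = eps ^- 2 by rewrite -scalemxAl.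
have Elz : E (l *: z) by apply: long_space_E lzl _; rewrite ?hlz.
have := le_trans (hk (l *: z)) (short_space_E d0' hax' lzs Elz).
rewrite hlz -(ler_pM2r (exprn_gt0 2 heps)) mulfVK ?expf_neq0 ?gt_eqF // -exprD.
by rewrite leNgt hek.
Qed.

Lemma rank_long_le delta delta' sigma V sigma' V' kappa :
  0 < delta -> 0 < delta' ->
  degenerate_axes delta sigma V -> degenerate_axes delta' sigma' V' ->
  (forall x, kappa * sqn (x *m Dm U w delta) <= sqn (x *m Dm U w delta')) ->
  eps ^+ 4 < kappa ->
  (\rank (long_space delta sigma V) <= \rank (long_space delta' sigma' V'))%N.
Proof.
move=> d0 d0' hax hax' hk hek.
have := disjoint_rank (long_short_disjoint d0 d0' hax hax' hk hek).
have := long_short_rank d0' hax'.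
have := rank_leq_col (long_space delta sigma V + short_space delta' sigma' V')%MS.
lia.
Qed.

End DegenerateDilates.

Lemma interval_chain (R : realType) (P : R -> nat -> Prop) (a b h : R) :
  0 < h -> a <= b ->
  (forall x, a <= x <= b -> exists k, P x k) ->
  (forall x y k l, a <= x -> x <= y <= b -> y <= x + h -> P x k -> P y l ->
     (k <= l)%N) ->
  forall k l, P a k -> P b l -> (k <= l)%N.
Proof.
move=> h0 ab ex step k l Pa Pb.
pose x n := Num.min (a + n%:R * h) b.
have xa n : a <= x n by rewrite le_min ab lerDl mulr_ge0 ?ler0n ?ltW.
have xb n : x n <= b by rewrite ge_min lexx orbT.
have xS n : x n <= x n.+1 <= x n + h.
  rewrite /x -natr1 mulrDl mul1r addrA !minEle.
  by case: ifPn => h1; case: ifPn => h2; rewrite -?ltNge in h1 h2;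
    apply/andP; split; lra.
have chain n l' : P (x n) l' -> (k <= l')%N.
  elim: n l' => [|n IH] l' Pl'.
    move: Pl'; rewrite /x mul0r addr0 (min_l ab) => Pl'.
    by apply: (step a a) => //; rewrite ?lexx ?ab ?lerDl ?ltW.
  have [k' Pk'] : exists k', P (x n) k' by apply: ex; rewrite xa xb.
  apply: leq_trans (IH k' Pk') (step _ _ _ _ (xa n) _ _ Pk' Pl').
    by case/andP: (xS n) => -> _; rewrite xb.
  by case/andP: (xS n).
have [N hN] : exists N, b <= a + N%:R * h.
  exists (Num.bound ((b - a) / h)).
  have ba : 0 <= b - a by rewrite subr_ge0.
  have := archi_boundP (divr_ge0 ba (ltW h0)).
  by rewrite ltr_pdivrMr // => /ltW; lra.
by apply: (chain N); rewrite /x (min_r hN).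
Qed.

Lemma expr_le2 (R : realFieldType) (t : R) (n : nat) :
  0 <= t -> n%:R * t <= 2^-1 -> (1 + t) ^+ n <= 2.
Proof.
move=> t0 hnt.
have bern k : (1 + t) ^+ k * (1 - k%:R * t) <= 1.
  elim: k => [|k IH]; first by rewrite expr0 mul0r subr0 mulr1.
  apply: le_trans IH; rewrite exprSr -natr1.
  have hp : 0 <= (1 + t) ^+ k by rewrite exprn_ge0 // addr_ge0.
  have hk : 0 <= (k%:R : R) by rewrite ler0n.
  move: ((1 + t) ^+ k) (k%:R : R) hp hk => P K hp hk.
  have : 0 <= P * (K * t * t + t * t) by rewrite mulr_ge0 // addr_ge0 ?mulr_ge0.
  nra.
have := bern n; have hp : 0 <= (1 + t) ^+ n by rewrite exprn_ge0 // addr_ge0.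
move: ((1 + t) ^+ n) (n%:R * t) hp hnt => P Q hp hQ hPQ.
have : 0 <= P * (2^-1 - Q) by rewrite mulr_ge0 // subr_ge0.
have k2 : (2 : R)^-1 * 2 = 1 by rewrite mulVf // pnatr_eq0.
move: ((2 : R)^-1) k2 hQ => k k2 hQ; nra.
Qed.

(* On a step from delta to delta' <= delta + a/(2(m+1)) with a <= delta,
   tau can shrink vectors at most by the factor (delta'/delta)^m
   (sqn_Dm_mono); its inverse square still exceeds eps^4 when eps < 1/2. *)
Lemma step_kappa (R : realType) (m : nat) (a delta delta' eps : R) :
  0 < a -> a <= delta -> delta <= delta' ->
  delta' <= delta + a / (2 * m.+1%:R) -> 0 < eps < 2^-1 ->
  eps ^+ 4 < ((delta' / delta) ^+ m) ^- 2.
Proof.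
move=> a0 ad dd' hstep /andP[e0 e2].
have d0 : 0 < delta by apply: lt_le_trans ad.
have m0 : 0 < 2 * m.+1%:R :> R by rewrite mulr_gt0 ?ltr0n.
set t := (delta' - delta) / delta.
have t0 : 0 <= t by rewrite /t divr_ge0 ?subr_ge0 // ltW.
have ratio : delta' / delta = 1 + t.
  by rewrite /t mulrBl divff ?gt_eqF // addrC subrK.
have hmt : m%:R * t <= 2^-1.
  have h1 : delta' - delta <= a / (2 * m.+1%:R) by rewrite lerBlDl.
  rewrite ler_pdivlMr // -[m.+1%:R]natr1 in h1.
  rewrite /t mulrA ler_pdivrMr // [_ * delta]mulrC ler_pdivlMr ?ltr0n //.
  move: (m%:R : R) h1 => M h1; nra.
have P2 := expr_le2 t0 hmt; rewrite ratio.
have P1 : 1 <= (1 + t) ^+ m by rewrite exprn_ege1 // lerDl.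
move: ((1 + t) ^+ m) P1 P2 => P P1 P2.
have P0 : 0 < P by apply: lt_le_trans P1.
rewrite -(ltr_pM2r (exprn_gt0 2 P0)) mulVf ?expf_neq0 ?gt_eqF //.
rewrite -[2^-1]mul1r ltr_pdivlMr ?ltr0n // in e2.
have q4 : eps ^+ 2 * 4 < 1 by nra.
have q0 : 0 < eps ^+ 2 by rewrite exprn_gt0.
rewrite (_ : 4 = 2 + 2)%N // exprD.
move: (eps ^+ 2) q0 q4 => Q q0 q4; rewrite expr2.
have PP : P * P <= 4 by nra.
have QQ : Q * Q * 4 < Q by nra.
nra.
Qed.

(* The arithmetic of the final estimate: a rescaling factor l with
   l^2 rho = eps^-2, l^2 tau <= eps^2 and rho <= 2 (2 eps)^-2 + 2 tau
   is at least 1, as long as eps < 1/2. *)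
Lemma rescale_ge1 (R : realFieldType) (eps l rho tau : R) :
  0 < eps < 2^-1 -> 0 < l -> l ^+ 2 * rho = eps ^- 2 ->
  l ^+ 2 * tau <= eps ^+ 2 ->
  rho <= 2 * ((2 * eps)^-1) ^+ 2 + 2 * tau -> 1 <= l.
Proof.
move=> /andP[e0 e2] l0 hrho htau hr.
have e20 : 0 < eps ^+ 2 by rewrite exprn_gt0.
have key : 1 <= l ^+ 2 / 2 + 2 * eps ^+ 2 * (l ^+ 2 * tau).
  have -> : l ^+ 2 / 2 + 2 * eps ^+ 2 * (l ^+ 2 * tau) =
            eps ^+ 2 * l ^+ 2 * (2 * ((2 * eps)^-1) ^+ 2 + 2 * tau).
    by field; rewrite gt_eqF.
  apply: le_trans (ler_wpM2l (ltW (mulr_gt0 e20 (exprn_gt0 2 l0))) hr).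
  by rewrite -mulrA hrho mulfV // gt_eqF.
rewrite -[2^-1]mul1r ltr_pdivlMr ?ltr0n // in e2.
have QQ : eps ^+ 2 * 4 < 1 by nra.
move: (l ^+ 2 * tau) (eps ^+ 2) htau key e20 QQ => T Q htau key Q0 QQ.
have T4 : 2 * Q * T <= 2 * Q * Q.
  by apply: ler_wpM2l htau; rewrite mulr_ge0 ?ltW.
have L2 : 1 <= l ^+ 2 by nra.
rewrite expr2 in L2; nra.
Qed.

Section DegenerateFamily.
Variables (R : realType) (d m : nat) (U : 'M[R]_d) (w : 'I_d -> nat)
  (E : set 'rV[R]_d) (eps a b : R).
Hypotheses (hU : orthonormal_rows U) (hw : forall i, (0 < w i <= m)%N)
  (heps : 0 < eps < 2^-1) (ha : 0 < a).
Implicit Types (sigma : 'I_d -> R) (V : 'M[R]_d) (x y z s : 'rV[R]_d).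

Let eps0 : 0 < eps. Proof. by case/andP: heps. Qed.

Let eps4_lt1 : eps ^+ 4 < 1.
Proof.
case/andP: heps => e0 e2; rewrite expr_lt1 ?ltW // (lt_trans e2) //.
by rewrite invf_lt1 ?ltr1n.
Qed.

Lemma near_long_space delta sigma V x : a <= delta ->
  degenerate_axes U w E eps a sigma V -> E x ->
  exists2 z, (z <= long_space U w eps a sigma V)%MS &
    sqn ((x - z) *m Dm U w delta) <= eps ^+ 2.
Proof.
move=> ad hax /(mem_E hU x ha hax)/ellipsoidP[c hc hxc].
case: (hax) => -[hs _] [hV [_ hgap]].
exists (scaled sigma c *m long_space U w eps a sigma V); first exact: submxMl.
apply: le_trans (proj2 (andP (sqn_Dm_mono hU hw _ ha ad))) _.
have -> : (x - scaled sigma c *m long_space U w eps a sigma V) *m Dm U w a =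
          scaled sigma c *m (1%:M - Plong eps sigma) *m V.
  rewrite mulmxBl hxc /long_space !mulmxA DmK ?gt_eqF //.
  by rewrite -mulmxBl mulmxBr mulmx1.
by rewrite sqn_orth //; exact: (short_part_le eps0 hs hgap hc).
Qed.

(* Rescaling z to
   |tau_b (l z)| = 1/eps puts l z in E, so tau_a (l z) = l (tau_a y - tau_a s)
   lies in the ellipsoid at a: its short part bounds s, which in turn bounds
   z and l from below, and its long part then shows that y is in E. *)
Lemma long_space_E_of_split_nz delta sigma V sigma' V' y z s :
  a <= delta -> delta <= b ->
  degenerate_axes U w E eps a sigma V -> degenerate_axes U w E eps b sigma' V' ->
  (y <= long_space U w eps a sigma V)%MS ->
  (z <= long_space U w eps b sigma' V')%MS ->
  (s <= short_space U w eps a sigma V)%MS -> y = z + s ->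
  sqn (z *m Dm U w b) != 0 ->
  sqn (y *m Dm U w delta) <= ((2 * eps)^-1) ^+ 2 -> E y.
Proof.
move=> ad db hax hax' hy hz hs yzs nz hyd.
have b0 : 0 < b by apply: lt_le_trans (le_trans ad db).
case: (hax) => -[hsig _] [hV [_ hgap]].
have [xi hxi hyxi] := long_spaceP hU ha hy.
have [t ht hst] := short_spaceP hU ha hs.
have [l l0 hl] := sqn_rescale nz eps0.
have Elz : E (l *: z).
  apply: (long_space_E hU eps0 b0 hax' (scalemx_sub l hz)).
  by rewrite -scalemxAl hl.
have /(mem_E hU _ ha hax)/ellipsoidP[c hc hcz] := Elz.
have hcxt : scaled sigma c = l *: (xi - t).
  apply: (orth_cancel hV); rewrite -hcz -!scalemxAl mulmxBl -hyxi -hst.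
  by rewrite -mulmxBl yzs addrK.
have htau : l ^+ 2 * sqn t <= eps ^+ 2.
  have := short_part_le eps0 hsig hgap hc.
  rewrite hcxt -scalemxAl mulmxBl (short_part_id ht) mulmxBr mulmx1 hxi.
  by rewrite subrr sub0r scalerN sqnN sqn_scale.
have hrho : sqn (z *m Dm U w b) <= 2 * ((2 * eps)^-1) ^+ 2 + 2 * sqn t.
  have -> : z *m Dm U w b = y *m Dm U w b - s *m Dm U w b.
    by rewrite yzs -mulmxBl addrK.
  apply: le_trans (sqn_sub_le _ _) _; apply: lerD; rewrite ler_pM2l ?ltr0n //.
    apply: le_trans hyd.
    by case/andP: (sqn_Dm_mono hU hw y (lt_le_trans ha ad) db).
  rewrite -(sqn_orth t hV) -hst.
  by case/andP: (sqn_Dm_mono hU hw s ha (le_trans ad db)).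
have l1 := rescale_ge1 heps l0 (etrans (esym (sqn_scale _ _)) hl) htau hrho.
apply: (proj2 (mem_E hU y ha hax)); rewrite hyxi.
have -> : xi = l^-1 *: (scaled sigma c *m Plong eps sigma).
  by rewrite hcxt -scalemxAl mulmxBl hxi ht subr0 scalerA mulVf ?gt_eqF ?scale1r.
by apply: ellipsoid_shrink hc _; rewrite invr_ge0 ltW //= invf_le1.
Qed.

(* Part (b) for y = z + s as above; if z = 0, then y lies in the long and in
   the short space at a, hence is 0, which belongs to E. *)
Lemma long_space_E_of_split delta sigma V sigma' V' y z s :
  a <= delta -> delta <= b ->
  degenerate_axes U w E eps a sigma V -> degenerate_axes U w E eps b sigma' V' ->
  (y <= long_space U w eps a sigma V)%MS ->
  (z <= long_space U w eps b sigma' V')%MS ->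
  (s <= short_space U w eps a sigma V)%MS -> y = z + s ->
  sqn (y *m Dm U w delta) <= ((2 * eps)^-1) ^+ 2 -> E y.
Proof.
move=> ad db hax hax' hy hz hs yzs.
have [/sqn_eq0 z0 | nz] := eqVneq (sqn (z *m Dm U w b)) 0; last first.
  exact: long_space_E_of_split_nz ad db hax hax' hy hz hs yzs nz.
have b0 : 0 < b by apply: lt_le_trans (le_trans ad db).
have -> : y = 0.
  have hk v : 1 * sqn (v *m Dm U w a) <= sqn (v *m Dm U w a) by rewrite mul1r.
  apply: (long_short_disjoint hU eps0 ha ha hax hax hk eps4_lt1 hy).
  suff zz : z = 0 by rewrite yzs zz add0r.
  by apply: (Dm_inj (w := w) hU (lt0r_neq0 b0)); rewrite /= z0 mul0mx.
move=> _; apply: (long_space_E hU eps0 ha hax); first exact: sub0mx.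
by rewrite mul0mx sqn0 invr_ge0 exprn_ge0 ?ltW.
Qed.

Hypothesis hdeg : forall delta, a <= delta <= b ->
  exists sigma V, degenerate_axes U w E eps delta sigma V.

Lemma rank_long_mono sigma V sigma' V' : a <= b ->
  degenerate_axes U w E eps a sigma V -> degenerate_axes U w E eps b sigma' V' ->
  (\rank (long_space U w eps a sigma V) <= \rank (long_space U w eps b sigma' V'))%N.
Proof.
move=> ab hax hax'.
pose P delta k := exists sigma V, degenerate_axes U w E eps delta sigma V /\
  k = \rank (long_space U w eps delta sigma V).
have h0 : 0 < a / (2 * m.+1%:R) by rewrite divr_gt0 ?mulr_gt0 ?ltr0n.
apply: (interval_chain (P := P) h0 ab); last by exists sigma', V'.
- move=> delta /hdeg[s [W hW]]; exists (\rank (long_space U w eps delta s W)).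
  by exists s, W.
- move=> x y k l ax /andP[xy _] hy [s [W [hW ->]]] [s' [W' [hW' ->]]].
  have x0 : 0 < x by apply: lt_le_trans ax.
  apply: (rank_long_le hU eps0 x0 (lt_le_trans x0 xy) hW hW' _
           (step_kappa ha ax xy hy heps)).
  by move=> v; case/andP: (sqn_Dm_mono hU hw v x0 xy).
- by exists sigma, V.
Qed.

Lemma long_short_split sigma V sigma' V' y : a <= b ->
  degenerate_axes U w E eps a sigma V -> degenerate_axes U w E eps b sigma' V' ->
  exists z s, [/\ (z <= long_space U w eps b sigma' V')%MS,
                  (s <= short_space U w eps a sigma V)%MS & y = z + s].
Proof.
move=> ab hax hax'; have b0 : 0 < b by apply: lt_le_trans ab.
have hk v : 1 * sqn (v *m Dm U w b) <= sqn (v *m Dm U w a).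
  by rewrite mul1r; case/andP: (sqn_Dm_mono hU hw v ha ab).
have hdisj := long_short_disjoint hU eps0 b0 ha hax' hax hk eps4_lt1.
have hr : (d <= \rank (long_space U w eps b sigma' V') +
               \rank (short_space U w eps a sigma V))%N.
  by have := rank_long_mono ab hax hax'; have := long_short_rank hU ha hax; lia.
have [p [q ->]] := disjoint_decompose y hdisj hr.
exists (p *m long_space U w eps b sigma' V'), (q *m short_space U w eps a sigma V).
by split; rewrite ?submxMl.
Qed.

End DegenerateFamily.

Unset Implicit Arguments.

Theorem lemma4p8 (R : realType) (d m : nat) (U : 'M[R]_d) (w : 'I_d -> nat)
  (hU : orthonormal_rows U) (hw : forall i, (0 < w i <= m)%N)
  (E : set 'rV[R]_d) (hE : is_ellipsoid E)
  (eps : R) (heps : 0 < eps < 2^-1)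
  (a b : R) (ha : 0 < a) (hab : a <= b)
  (hdeg : forall delta : R, a <= delta <= b -> eps_degenerate eps (dil U w delta @` E)) :
  exists H : 'M[R]_d,
    forall delta : R, a <= delta <= b ->
      (dil U w delta @` E `<=`
         msum (dil U w delta @` [set x | (x <= H)%MS]) (ballr eps)) /\
      (dil U w delta @` [set x | (x <= H)%MS] `&` ballr ((2 * eps)^-1)
         `<=` dil U w delta @` E).
Proof.
have eps0 : 0 < eps by case/andP: heps.
have [sigma [V hax]] : exists sigma V, degenerate_axes U w E eps a sigma V.
  by apply: hdeg; rewrite lexx hab.
have [sigma' [V' hax']] : exists sigma V, degenerate_axes U w E eps b sigma V.
  by apply: hdeg; rewrite lexx hab.
exists (long_space U w eps a sigma V) => delta /andP[ad db]; split.
- move=> _ [x Ex <-].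
  have [z hz hxz] := near_long_space hU hw heps ha ad hax Ex.
  exists (dil U w delta z), ((x - z) *m Dm U w delta); split; first by exists z.
  split; first by rewrite /ballr /= vnorm_leE ?(ltW eps0).
  by rewrite !dilE -mulmxDl addrC subrK.
- move=> _ [[y hy <-] hyb]; exists y => //.
  have [z [s [hz hs yzs]]] := long_short_split hU hw heps ha hdeg y hab hax hax'.
  apply: (long_space_E_of_split hU hw heps ha ad db hax hax' hy hz hs yzs).
  by move: hyb; rewrite /ballr /= dilE vnorm_leE // invr_ge0 mulr_ge0 ?ltW.
Qed.
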